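(* Let $L$ be a distributive lattice with minimum $0_L$ and maximum $1_L$, and let $K_L=\{x^*\in L^*:\max\{|x^*(0_L)|,|x^*(1_L)|\}=1\}$ with the product (pointwise) topology. If $U\subseteq K_L$ is open, $x_0^*\in U$ and $\varepsilon>0$, then there exists $g\in\mathrm{FVL}\langle L\rangle$ with $g\ge0$ such that $g(x_0^* )>0$, $g\le\varepsilon$ on $U$, and $g=0$ on $K_L\setminus U$.
   Context: $L^*$ is the set of all lattice homomorphisms $x^*:L\to[-1,1]$; for $x\in L$, $\delta_x:L^*\to\mathbb R$ is $\delta_x(x^* )=x^*(x)$. $\mathrm{FVL}\langle L\rangle$ is the vector sublattice of $\mathbb R^{L^*}$ (pointwise operations) generated by $\{\delta_x:x\in L\}$. $\mathrm{FBL}\langle L\rangle$ is its norm closure with respect to the norm $\|f\|=\sup\{\sum_{i=1}^m|f(x_i^* )|: m\in\mathbb N,\ x_i^*\in L^*,\ \sup_{x\in L}\sum_{i=1}^m|x_i^*(x)|\le1\}$ within positively homogeneous functions on $L^*$. *)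

From HB Require Import structures.
From mathcomp Require Import all_boot all_order all_algebra.
From mathcomp Require Import all_classical all_reals all_analysis.
Set Implicit Arguments. Unset Strict Implicit. Unset Printing Implicit Defensive.
Import Order.TTheory GRing.Theory Num.Theory.
Import numFieldTopology.Exports.
Local Open Scope ring_scope.
Local Open Scope classical_set_scope.

Section FBL.
Variables (d : Order.disp_t) (L : distrLatticeType d) (R : realType).

Definition is_lattice_hom_pm1 (xs : L -> R) : Prop :=
  [/\ forall a b, xs (Order.meet a b) = Num.min (xs a) (xs b),
      forall a b, xs (Order.join a b) = Num.max (xs a) (xs b) &
      forall a, -1 <= xs a <= 1].

Definition Lstar : set (L -> R) := [set xs | is_lattice_hom_pm1 xs].

Definition delta (a : L) : (L -> R) -> R := fun xs => xs a.

(* FVL<L>: the vector sublattice of R^(Lstar) generated by the delta_x,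
   i.e. the smallest set of functions containing all delta_x and closed
   under pointwise addition, scalar multiplication, max and min.
   (Functions are defined on all of L -> R; only their values on L^*
   are ever used.) *)
Inductive FVL : ((L -> R) -> R) -> Prop :=
| FVL_delta a : FVL (delta a)
| FVL_add f g : FVL f -> FVL g -> FVL (fun xs => f xs + g xs)
| FVL_scale (c : R) f : FVL f -> FVL (fun xs => c * f xs)
| FVL_max f g : FVL f -> FVL g -> FVL (fun xs => Num.max (f xs) (g xs))
| FVL_min f g : FVL f -> FVL g -> FVL (fun xs => Num.min (f xs) (g xs)).

End FBL.

Section KL.
Variables (d : Order.disp_t) (L : tbDistrLatticeType d) (R : realType).

Definition KL : set (L -> R) :=
  [set xs | Lstar xs /\ Num.max `|xs \bot%O| `|xs \top%O| = 1].

Definition open_in_KL (U : set (L -> R)) : Prop :=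
  U `<=` KL /\
  exists V : set {ptws L -> R}, open V /\ U = V `&` KL.
End KL.

From HB Require Import structures.
From mathcomp Require Import all_boot all_order all_algebra.
From mathcomp Require Import all_classical all_reals all_analysis.
From mathcomp Require Import lra.
Set Implicit Arguments. Unset Strict Implicit. Unset Printing Implicit Defensive.
Import Order.TTheory GRing.Theory Num.Theory.
Import numFieldTopology.Exports.
Local Open Scope ring_scope.
Local Open Scope classical_set_scope.

(* The function N(x* ) = max(|x*(0_L)|, |x*(1_L)|) lies in FVL<L> and is 1 on
   K_L, so it can be used to homogenise: given a basic product neighbourhood
   {x* : |x*(a) - x0*(a)| < e for a in s} of x0* inside U, the element
     g = (min(e, eps) N - sum_(a in s) |delta_a - x0*(a) N|)^+
   of FVL<L> equals (min(e, eps) - sum_(a in s) |x*(a) - x0*(a)|)^+ on K_L: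
   it is min(e, eps) at x0*, at most eps everywhere on K_L, and vanishes on
   K_L outside the neighbourhood. *)

Section FVLClosure.
Variables (d : Order.disp_t) (L : distrLatticeType d) (R : realType).
Implicit Types f g : (L -> R) -> R.

Lemma FVL_ext f g : f =1 g -> FVL f -> FVL g.
Proof. by move=> /funext ->. Qed.

Lemma FVL_opp f : FVL f -> FVL (fun xs => - f xs).
Proof. by move=> Ff; apply: FVL_ext (FVL_scale (-1) Ff) => xs; rewrite mulN1r. Qed.

Lemma FVL_sub f g : FVL f -> FVL g -> FVL (fun xs => f xs - g xs).
Proof. by move=> Ff Fg; apply: FVL_add Ff (FVL_opp Fg). Qed.

Lemma FVL_abs f : FVL f -> FVL (fun xs => `|f xs|).
Proof. by move=> Ff; apply: FVL_ext (FVL_max Ff (FVL_opp Ff)) => xs; rewrite maxrN. Qed.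

(* An element of L is needed: FVL<L> has no generators when L is empty. *)
Lemma FVL_zero (a : L) : FVL (fun _ : L -> R => 0).
Proof. by apply: FVL_ext (FVL_scale 0 (FVL_delta R a)) => xs; rewrite mul0r. Qed.

Lemma FVL_pos_part (a : L) f : FVL f -> FVL (fun xs => Num.max (f xs) 0).
Proof. by move=> Ff; apply: FVL_max Ff (FVL_zero a). Qed.

Lemma FVL_sum (a0 : L) (I : Type) (s : seq I) (F : I -> (L -> R) -> R) :
  (forall i, FVL (F i)) -> FVL (fun xs => \sum_(i <- s) F i xs).
Proof.
move=> FF; elim: s => [|i s IHs].
  by apply: FVL_ext (FVL_zero a0) => xs; rewrite big_nil.
by apply: FVL_ext (FVL_add (FF i) IHs) => xs; rewrite big_cons.
Qed.

End FVLClosure.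

Lemma psumr_lt_all (T : Type) (R : realDomainType) (s : seq T) (F : T -> R) (e : R) :
  (forall i, 0 <= F i) -> \sum_(i <- s) F i < e -> all (fun i => F i < e) s.
Proof.
move=> F_ge0; elim: s => [|i s IHs] //=; rewrite big_cons => sum_lt.
have sum_ge0 : 0 <= \sum_(j <- s) F j by apply: sumr_ge0.
have Fi_ge0 := F_ge0 i.
by apply/andP; split; [|apply: IHs]; lra.
Qed.

Section PointwiseBoxes.
Variables (L : choiceType) (R : realType).

Definition box_nbhs (x0 : L -> R) : set_system (L -> R) :=
  fun P => exists s : seq L, exists2 e : R, 0 < e &
    forall f, all (fun a => `|f a - x0 a| < e) s -> P f.

Lemma box_nbhs_filter x0 : Filter (box_nbhs x0).
Proof.
split.
- by exists [::]; exists 1.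
- move=> P Q [s1 [e1 e1_gt0 P_box]] [s2 [e2 e2_gt0 Q_box]].
  exists (s1 ++ s2); exists (Num.min e1 e2); first by rewrite lt_min e1_gt0.
  move=> f; rewrite all_cat => /andP[f_s1 f_s2]; split.
  + by apply: P_box; apply: sub_all f_s1 => a; rewrite lt_min => /andP[].
  + by apply: Q_box; apply: sub_all f_s2 => a; rewrite lt_min => /andP[].
- by move=> P Q PQ [s [e e_gt0 P_box]]; exists s; exists e => // f /P_box /PQ.
Qed.

Lemma open_ptws_box (V : set {ptws L -> R}) (x0 : L -> R) :
  open V -> V x0 -> box_nbhs x0 V.
Proof.
move=> oV Vx0; have box_filter := box_nbhs_filter x0.
suff : {ptws, box_nbhs x0 --> x0} by apply; exact: open_nbhs_nbhs.
apply/(@pointwise_cvgP (discrete_topology L) R _ x0 box_filter) => a.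
move=> A /= /nbhs_ballP[e /= e_gt0 ballA].
exists [:: a]; exists e => // f /=; rewrite andbT => fa_near.
by apply: ballA; rewrite /ball /= distrC.
Qed.

End PointwiseBoxes.

Section KLNorm.
Variables (d : Order.disp_t) (L : tbDistrLatticeType d) (R : realType).

Definition KL_norm (xs : L -> R) : R := Num.max `|xs \bot%O| `|xs \top%O|.

Lemma FVL_KL_norm : FVL KL_norm.
Proof. by apply: FVL_max; apply: FVL_abs; apply: FVL_delta. Qed.

Lemma KL_norm1 xs : KL xs -> KL_norm xs = 1.
Proof. by case. Qed.

Definition box_bump (del : R) (x0 : L -> R) (s : seq L) (xs : L -> R) : R :=
  Num.max (del * KL_norm xs - \sum_(a <- s) `|xs a - x0 a * KL_norm xs|) 0.

Lemma FVL_box_bump del x0 s : FVL (box_bump del x0 s).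
Proof.
apply: (FVL_pos_part \bot%O); apply: FVL_sub.
  exact: FVL_scale FVL_KL_norm.
apply: (FVL_sum \bot%O) => a; apply: FVL_abs; apply: FVL_sub.
  exact: FVL_delta.
exact: FVL_scale FVL_KL_norm.
Qed.

Lemma box_bump_KL del x0 s xs : KL xs ->
  box_bump del x0 s xs = Num.max (del - \sum_(a <- s) `|xs a - x0 a|) 0.
Proof.
move=> Kxs; rewrite /box_bump KL_norm1 // mulr1.
by under eq_bigr => a _ do rewrite mulr1.
Qed.

End KLNorm.

Theorem mainTheorem6 (d : Order.disp_t) (L : tbDistrLatticeType d)
  (R : realType) (U : set (L -> R)) (x0 : L -> R) (eps : R) :
  open_in_KL U -> U x0 -> 0 < eps ->
  exists g : (L -> R) -> R,
    [/\ FVL g,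
        (forall xs, Lstar xs -> 0 <= g xs),
        0 < g x0,
        (forall xs, U xs -> g xs <= eps) &
        (forall xs, (KL (R:=R) `\` U) xs -> g xs = 0)].
Proof.
move=> [UK [V [oV UV]]] Ux0 eps_gt0.
have Vx0 : V x0 by move: Ux0; rewrite UV => -[].
have [s [e e_gt0 V_box]] := open_ptws_box oV Vx0.
pose del := Num.min e eps.
have del_gt0 : 0 < del by rewrite lt_min e_gt0.
have [del_le_e del_le_eps] : del <= e /\ del <= eps by rewrite !ge_min !lexx orbT.
exists (box_bump del x0 s).
have sum_ge0 xs : 0 <= \sum_(a <- s) `|xs a - x0 a| by apply: sumr_ge0.
split.
- exact: FVL_box_bump.
- by move=> xs _; rewrite le_max lexx orbT.
- rewrite box_bump_KL; last exact: UK.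
  by rewrite big1_seq ?subr0 ?lt_max ?del_gt0 // => a _; rewrite subrr normr0.
- move=> xs Uxs; rewrite box_bump_KL; last exact: UK.
  rewrite ge_max (ltW eps_gt0) andbT.
  by have := sum_ge0 xs; lra.
- move=> xs [Kxs nUxs]; rewrite box_bump_KL //; apply: max_r.
  rewrite leNgt; apply/negP => bump_pos; apply: nUxs; rewrite UV; split => //.
  have sum_lt_e : \sum_(a <- s) `|xs a - x0 a| < e by lra.
  exact/V_box/(psumr_lt_all (fun a => normr_ge0 (xs a - x0 a))).
Qed.
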